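(* Let $P_k\ge 1$, $\mu>0$, $\beta>0$, $s_k>0$ and $\nu=(\nu_1,\dots,\nu_{P_k})^\top\in\mathbb{R}^{P_k}$. Consider $$\min_{x\in\mathbb{R}^{P_k},\ x\ge 0}\ \ -U_k\Big(\sum_{i=1}^{P_k}x_i\Big)+\frac{\mu}{2}\|x-\nu\|_2^2 .$$ Then this problem has a unique minimizer $x^\star$, given by $x^\star_i=\max(0,\nu_i+\zeta)$ for all $i$, where $\zeta$ is the unique positive number such that $\sum_{i}\max(0,\nu_i+\zeta)>0$ and $$\mu\zeta=U_k'\Big(\sum_{i=1}^{P_k}\max(0,\nu_i+\zeta)\Big).$$ Moreover, suppose (after relabeling) $\nu_1\ge\nu_2\ge\dots\ge\nu_{P_k}$, and use the convention $U_k'(0)=+\infty$. If there is a smallest index $i'\in\{2,\dots,P_k\}$ such that $\zeta_0:=-\nu_{i'}>0$ and $\mu\zeta_0\ge U_k'\big(\sum_{i=1}^{P_k}\max(0,\nu_i+\zeta_0)\big)$, then $\zeta$ is the largest real root of the cubic equation $$\mu\zeta\Big(\sum_{i=1}^{i'-1}(\nu_i+\zeta)\Big)^2=\beta\sum_{i=1}^{i'-1}(\nu_i+\zeta)+s_k ;$$ otherwise $\zeta$ is the largest real root of the cubic equation $$\mu\zeta\Big(\sum_{i=1}^{P_k}(\nu_i+\zeta)\Big)^2=\beta\sum_{i=1}^{P_k}(\nu_i+\zeta)+s_k .$$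
   Context: $U_k(u)=\beta\log u-\frac{s_k}{u}$ for $u>0$ (so $U_k'(u)=\frac{\beta}{u}+\frac{s_k}{u^2}$), and $-U_k(0)$ is taken to be $+\infty$, so that the objective equals $+\infty$ at $x=0$. *)

From HB Require Import structures.
From mathcomp Require Import all_boot all_order all_algebra.
From mathcomp Require Import all_classical all_reals all_analysis.
Set Implicit Arguments. Unset Strict Implicit. Unset Printing Implicit Defensive.
Import Order.TTheory GRing.Theory Num.Theory.
Local Open Scope ring_scope.

Section Defs.
Variable R : realType.

Definition Uk (beta s u : R) : R := beta * ln u - s / u.

Definition Uk' (beta s u : R) : R := beta / u + s / u ^+ 2.

Definition Uk'_ext (beta s u : R) : \bar R :=
  if 0 < u then (Uk' beta s u)%:E else +oo%E.

Definition objective n (beta s mu : R) (nu x : 'I_n -> R) : \bar R :=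
  let S := \sum_(i < n) x i in
  if S == 0 then +oo%E
  else (- Uk beta s S + mu / 2 * \sum_(i < n) (x i - nu i) ^+ 2)%:E.

Definition feasible n (x : 'I_n -> R) : Prop := forall i, 0 <= x i.

Definition is_minimizer n (beta s mu : R) (nu x : 'I_n -> R) : Prop :=
  feasible x /\
  forall y, feasible y -> (objective beta s mu nu x <= objective beta s mu nu y)%E.

Definition zeta_cond n (beta s mu : R) (nu : 'I_n -> R) (z : R) : Prop :=
  let S := \sum_(i < n) Num.max 0 (nu i + z) in
  0 < z /\ 0 < S /\ mu * z = Uk' beta s S.

(* index condition on j (0-based; j >= 1 corresponds to i' in {2,...,P_k}):
   zeta0 := - nu_j > 0 and mu zeta0 >= U_k'(sum_i max(0, nu_i + zeta0)) *)
Definition index_cond n (beta s mu : R) (nu : 'I_n -> R) (j : 'I_n) : Prop :=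
  let z0 := - nu j in
  (1 <= j)%N /\ 0 < z0 /\
  (Uk'_ext beta s (\sum_(i < n) Num.max 0 (nu i + z0)) <= (mu * z0)%:E)%E.

Definition smallest_index n (beta s mu : R) (nu : 'I_n -> R) (j : 'I_n) : Prop :=
  index_cond beta s mu nu j /\
  forall k : 'I_n, index_cond beta s mu nu k -> (j <= k)%N.

Definition cubic_eq n (beta s mu : R) (nu : 'I_n -> R) (m : nat) (z : R) : Prop :=
  let T := \sum_(i < n | (i < m)%N) (nu i + z) in
  mu * z * T ^+ 2 = beta * T + s.

Definition is_largest_root (E : R -> Prop) (z : R) : Prop :=
  E z /\ forall w, E w -> w <= z.

End Defs.

(* The objective f(x) = -U_k(sum x) + mu/2 |x - nu|^2 is finite exactly where
   sum x > 0.  Writing S(z) = sum_i max(0, nu_i + z) (active_sum), zeta is a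
   zero of the continuous residual mu z S(z)^2 - beta S(z) - s with S(z) > 0;
   it exists by the intermediate value theorem and is unique because
   z |-> mu z is increasing while z |-> U_k'(S(z)) is nonincreasing.  The same
   monotonicity shows that the index condition at j says exactly zeta <= -nu_j.

   For x = max(0, nu + zeta), concavity of U_k (tangent inequality) together
   with the variational inequality of the orthant projection gives the
   quadratic growth  f(x) + mu/2 |y - x|^2 <= f(y),  so x is the unique
   minimizer.  Finally, for sorted nu the active set at zeta is {i < i'} (or
   everything when no index qualifies); on that set S is the truncated sum of
   the cubic equation, and a monotonicity argument shows zeta is its largest
   root. *)

From mathcomp Require Import all_boot all_order all_algebra.
From mathcomp Require Import all_classical all_reals all_analysis.
From mathcomp Require Import ring lra.
Import Order.TTheory GRing.Theory Num.Theory.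
Import numFieldNormedType.Exports.
Set Implicit Arguments. Unset Strict Implicit.
Local Open Scope ring_scope.
Lemma continuous_bigsum (R : realType) (I : Type) (r : seq I) (F : I -> R -> R) :
  (forall i, continuous (F i)) -> continuous (fun z => \sum_(i <- r) F i z).
Proof.
move=> F_cont; elim: r => [|a r IH].
  by under eq_fun do rewrite big_nil; exact: cst_continuous.
under eq_fun do rewrite big_cons.
by move=> x; apply: continuousD; [exact: F_cont | exact: IH].
Qed.

Section ActiveSum.
Variables (R : realType) (n : nat) (nu : 'I_n -> R).

Definition active_sum (z : R) : R := \sum_(i < n) Num.max 0 (nu i + z).

Lemma active_sum_ge0 z : 0 <= active_sum z.
Proof. by apply: sumr_ge0 => i _; rewrite le_max lexx. Qed.

Lemma active_sum_mono z w : z <= w -> active_sum z <= active_sum w.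
Proof. by move=> zw; apply: ler_sum => i _; rewrite le_max2 // lerD2l. Qed.

Lemma active_sum_continuous : continuous active_sum.
Proof.
apply: continuous_bigsum => i x.
apply: (@continuous_max R R (fun=> 0) (fun z => nu i + z)); first exact: cst_continuous.
by apply: continuousD; [exact: cst_continuous | done].
Qed.

Lemma active_sum_truncate (m : nat) z :
  (forall i : 'I_n, (i < m)%N -> 0 <= nu i + z) ->
  (forall i : 'I_n, ~~ (i < m)%N -> nu i + z <= 0) ->
  active_sum z = \sum_(i < n | (i < m)%N) (nu i + z).
Proof.
move=> act inact; rewrite /active_sum (bigID (fun i : 'I_n => (i < m)%N)) /=.
rewrite [X in _ + X]big1 ?addr0; last by move=> i /inact /max_l.
by apply: eq_bigr => i /act /max_r.
Qed.

Lemma active_sum_large (i0 : 'I_n) (A z : R) :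
  (forall i, `|nu i| <= A) -> A + 1 <= z -> 1 <= active_sum z.
Proof.
move=> nuA Az; rewrite /active_sum (bigD1 i0) //=.
have one_le : 1 <= Num.max 0 (nu i0 + z).
  rewrite le_max; apply/orP; right.
  have := nuA i0; have := ler_norm (- nu i0); rewrite normrN; lra.
apply: le_trans one_le _; rewrite lerDl.
by apply: sumr_ge0 => i _; rewrite le_max lexx.
Qed.

Lemma active_sum_small (A : R) :
  (forall i, `|nu i| <= A) -> active_sum (- A) = 0.
Proof.
move=> nuA; apply: big1 => i _; apply/max_l.
by have := nuA i; have := ler_norm (nu i); lra.
Qed.

End ActiveSum.

(* ln t <= t - 1, from exp x >= 1 + x; used for the concavity of U_k. *)
Lemma ln_le_subr1 (R : realType) (t : R) : 0 < t -> ln t <= t - 1.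
Proof. by move=> t0; have := expR_ge1Dx (ln t); rewrite lnK ?posrE //; lra. Qed.

Section Utility.
Variables (R : realType) (beta s : R).
Hypotheses (beta_gt0 : 0 < beta) (s_gt0 : 0 < s).

Lemma Uk'_gt0 u : 0 < u -> 0 < Uk' beta s u.
Proof. by move=> u_gt0; rewrite /Uk' addr_gt0 // divr_gt0 // exprn_gt0. Qed.

Lemma Uk'_nonincr a b : 0 < a -> a <= b -> Uk' beta s b <= Uk' beta s a.
Proof.
move=> a_gt0 ab; have b_gt0 : 0 < b by apply: lt_le_trans ab.
rewrite /Uk'; apply: lerD; apply: ler_wpM2l; try exact: ltW.
  by rewrite lef_pV2 ?posrE.
by rewrite lef_pV2 ?posrE ?exprn_gt0 // !expr2 ler_pM // ltW.
Qed.

Lemma Uk'_eq_cubic c S :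
  0 < S -> (c = Uk' beta s S) <-> (c * S ^+ 2 = beta * S + s).
Proof.
move=> S_gt0; have S_neq0 : S != 0 by rewrite gt_eqF.
split=> [->|cS]; first by rewrite /Uk'; field.
by rewrite /Uk' -[c](mulfK (expf_neq0 2 S_neq0)) cS; field.
Qed.

Lemma Uk_tangent a b :
  0 < a -> 0 < b -> Uk beta s b <= Uk beta s a + Uk' beta s a * (b - a).
Proof.
move=> a_gt0 b_gt0; have a_neq0 : a != 0 by rewrite gt_eqF.
have b_neq0 : b != 0 by rewrite gt_eqF.
have ln_part : beta * (ln b - ln a) <= beta / a * (b - a).
  rewrite -ln_div ?posrE // (_ : beta / a * (b - a) = beta * (b / a - 1)); last by field.
  apply: ler_wpM2l; first exact: ltW.
  by apply: ln_le_subr1; rewrite divr_gt0.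
have inv_part : 0 <= s * (b - a) ^+ 2 / (b * a ^+ 2).
  by apply: divr_ge0; apply: mulr_ge0; rewrite ?sqr_ge0 ?exprn_ge0 // ltW.
have inv_id : s / b - s / a + s / a ^+ 2 * (b - a) = s * (b - a) ^+ 2 / (b * a ^+ 2).
  by field; rewrite a_neq0 b_neq0.
rewrite /Uk /Uk'; lra.
Qed.

End Utility.

Section Zeta.
Variables (R : realType) (n : nat) (beta s mu : R) (nu : 'I_n -> R).
Hypotheses (beta_gt0 : 0 < beta) (s_gt0 : 0 < s) (mu_gt0 : 0 < mu).

(* The test U_k'(S(w)) <= mu w (with U_k'(0) = +oo) used in the index
   condition; since w |-> U_k'(S(w)) is nonincreasing and w |-> mu w is
   increasing, it holds exactly from zeta on. *)
Definition zeta_test (w : R) : Prop :=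
  (Uk'_ext beta s (active_sum nu w) <= (mu * w)%:E)%E.

Lemma zeta_test_above z w : zeta_cond beta s mu nu z -> z <= w -> zeta_test w.
Proof.
move=> [_ [Sz_gt0 Ez]] zw.
have Sw_gt0 : 0 < active_sum nu w by apply: lt_le_trans (active_sum_mono nu zw).
rewrite /zeta_test /Uk'_ext Sw_gt0 lee_fin.
apply: le_trans (Uk'_nonincr beta_gt0 s_gt0 Sz_gt0 (active_sum_mono nu zw)) _.
by rewrite -[Uk' _ _ _]Ez ler_wpM2l // ltW.
Qed.

Lemma zeta_test_below z w : zeta_cond beta s mu nu z -> w < z -> ~ zeta_test w.
Proof.
move=> [_ [_ Ez]] wz; rewrite /zeta_test /Uk'_ext.
case: ifP => [Sw_gt0|//]; rewrite lee_fin => test_w.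
have := Uk'_nonincr beta_gt0 s_gt0 Sw_gt0 (active_sum_mono nu (ltW wz)).
rewrite -[Uk' _ _ (active_sum _ z)]Ez => /le_trans /(_ test_w).
by rewrite ler_pM2l // leNgt wz.
Qed.

Lemma zeta_cond_unique z1 z2 :
  zeta_cond beta s mu nu z1 -> zeta_cond beta s mu nu z2 -> z1 = z2.
Proof.
move=> Z1 Z2; case: (ltgtP z1 z2) => // lt.
  by case: (zeta_test_below Z2 lt); exact: zeta_test_above Z1 _.
by case: (zeta_test_below Z1 lt); exact: zeta_test_above Z2 _.
Qed.

Definition cubic_residual (z : R) : R :=
  mu * z * active_sum nu z ^+ 2 - beta * active_sum nu z - s.

Lemma cubic_residual_continuous : continuous cubic_residual.
Proof.
move=> x; have S_cont : continuous (active_sum nu) := @active_sum_continuous R n nu.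
have cubic_term : {for x, continuous (fun z => mu * z * active_sum nu z ^+ 2)}.
  apply: continuousM; first by apply: continuousM; [exact: cst_continuous | done].
  exact: continuousM (S_cont x) (S_cont x).
have linear_term : {for x, continuous (fun z => beta * active_sum nu z)}.
  by apply: continuousM; [exact: cst_continuous | exact: S_cont].
by have := continuousB (continuousB cubic_term linear_term) (@cst_continuous R R s x).
Qed.

Lemma zeta_cond_of_root z : cubic_residual z = 0 -> zeta_cond beta s mu nu z.
Proof.
rewrite /cubic_residual => root.
have S_gt0 : 0 < active_sum nu z.
  rewrite lt_neqAle active_sum_ge0 andbT; apply/negP => /eqP S0.
  by move: root; rewrite -S0 expr2 !mulr0 !subr0 sub0r => /eqP; rewrite oppr_eq0 gt_eqF.
have Ez : mu * z = Uk' beta s (active_sum nu z).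
  by apply/(Uk'_eq_cubic _ _ _ S_gt0); lra.
split; last by split.
by have := Uk'_gt0 beta_gt0 s_gt0 S_gt0; rewrite -Ez pmulr_rgt0.
Qed.

Lemma zeta_cond_exists : (0 < n)%N -> exists z, zeta_cond beta s mu nu z.
Proof.
move=> n_gt0; pose A := \sum_(i < n) `|nu i|.
have A_ge0 : 0 <= A by apply: sumr_ge0.
have nuA i : `|nu i| <= A.
  by rewrite /A (bigD1 i) //= lerDl; apply: sumr_ge0.
pose hi := A + 1 + (beta + s) / mu.
have hi_large : A + 1 <= hi by rewrite /hi lerDl divr_ge0 // ltW // addr_gt0.
have mu_hi : beta + s <= mu * hi.
  rewrite /hi mulrDr mulrCA divff ?gt_eqF // mulr1 lerDr.
  by apply: mulr_ge0; [exact: ltW | lra].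
have res_lo : cubic_residual (- A) = - s.
  by rewrite /cubic_residual active_sum_small // expr2 !mulr0 !subr0 sub0r.
have res_hi : 0 <= cubic_residual hi.
  have S1 := active_sum_large (Ordinal n_gt0) nuA hi_large.
  rewrite /cubic_residual; set S := active_sum nu hi in S1 *.
  have S_ge0 : 0 <= S by apply: le_trans S1.
  have S_scaled : (beta + s) * S <= mu * hi * S by rewrite ler_wpM2r.
  have : (beta + s) * S * S <= mu * hi * S * S by rewrite ler_wpM2r.
  have : 0 <= beta * S * (S - 1) by rewrite !mulr_ge0 ?subr_ge0 // ltW.
  have : 0 <= s * (S * S - 1).
    by apply: mulr_ge0; [exact: ltW | rewrite subr_ge0 mulr_ege1].
  rewrite expr2; nra.
have lo_hi : - A <= hi by lra.
have sign_change : Num.min (cubic_residual (- A)) (cubic_residual hi) <= 0 <=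
                   Num.max (cubic_residual (- A)) (cubic_residual hi).
  by rewrite res_lo ge_min le_max res_hi orbT oppr_le0 ltW.
have [z _ root] := IVT lo_hi (continuous_subspaceT cubic_residual_continuous) sign_change.
by exists z; apply: zeta_cond_of_root.
Qed.

Lemma index_cond_ge z j :
  zeta_cond beta s mu nu z -> index_cond beta s mu nu j -> z <= - nu j.
Proof.
move=> Z [_ [_ test]]; rewrite leNgt; apply/negP => lt.
exact: zeta_test_below Z lt test.
Qed.

Lemma index_cond_of_le z (j : 'I_n) :
  zeta_cond beta s mu nu z -> (1 <= j)%N -> z <= - nu j -> index_cond beta s mu nu j.
Proof.
move=> Z j_ge1 zj; have [z_gt0 _] := Z.
by split=> //; split; [exact: lt_le_trans zj | exact: zeta_test_above Z zj].
Qed.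

End Zeta.

Lemma orthant_projection_variational (R : realType) n (nu : 'I_n -> R) z (y : 'I_n -> R) :
  feasible y ->
  0 <= \sum_(i < n) (Num.max 0 (nu i + z) - nu i - z) * (y i - Num.max 0 (nu i + z)).
Proof.
move=> y_ge0; apply: sumr_ge0 => i _.
case: (leP 0 (nu i + z)) => [_|neg].
  by rewrite (_ : nu i + z - nu i - z = 0) ?mul0r //; ring.
by apply: mulr_ge0; [lra | rewrite subr0; exact: y_ge0].
Qed.

Section Optimality.
Variables (R : realType) (n : nat) (beta s mu : R) (nu : 'I_n -> R).
Hypotheses (beta_gt0 : 0 < beta) (s_gt0 : 0 < s) (mu_gt0 : 0 < mu).

Definition finite_objective (x : 'I_n -> R) : R :=
  - Uk beta s (\sum_(i < n) x i) + mu / 2 * \sum_(i < n) (x i - nu i) ^+ 2.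

Lemma objective_finite x :
  \sum_(i < n) x i != 0 -> objective beta s mu nu x = (finite_objective x)%:E.
Proof. by rewrite /objective => /negbTE ->. Qed.

Definition zeta_point (z : R) : 'I_n -> R := fun i => Num.max 0 (nu i + z).

Lemma zeta_point_feasible z : feasible (zeta_point z).
Proof. by move=> i; rewrite /zeta_point le_max lexx. Qed.

(* Quadratic growth of the objective around the candidate: the objective is
   the sum of a concave-composed term and a mu-strongly convex one, and the
   first-order optimality condition holds at zeta_point z. *)
Lemma objective_growth z y :
  zeta_cond beta s mu nu z -> feasible y -> \sum_(i < n) y i != 0 ->
  finite_objective (zeta_point z)
    + mu / 2 * \sum_(i < n) (y i - zeta_point z i) ^+ 2 <= finite_objective y.
Proof.
move=> [_ [Sx_gt0 Ez]] y_ge0 Sy_neq0.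
have Sx_def : \sum_(i < n) zeta_point z i = active_sum nu z by [].
set x := zeta_point z in Sx_def *; set Sx := active_sum nu z in Sx_gt0 Ez Sx_def.
set Sy := \sum_(i < n) y i in Sy_neq0 *.
have Sy_gt0 : 0 < Sy by rewrite lt_neqAle eq_sym Sy_neq0 sumr_ge0.
have tangent : Uk beta s Sy <= Uk beta s Sx + mu * z * (Sy - Sx).
  by rewrite Ez; exact: Uk_tangent.
set A := \sum_(i < n) (y i - x i).
have A_def : Sy - Sx = A by rewrite /A sumrB Sx_def.
set B := \sum_(i < n) (x i - nu i) * (y i - x i).
set C := \sum_(i < n) (y i - x i) ^+ 2.
have sq_expand : \sum_(i < n) (y i - nu i) ^+ 2 = \sum_(i < n) (x i - nu i) ^+ 2 + 2 * B + C.
  by rewrite /B /C mulr_sumr -!big_split /=; apply: eq_bigr => i _; ring.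
have var_ineq := orthant_projection_variational nu z y_ge0.
have B_split : \sum_(i < n) (x i - nu i - z) * (y i - x i) = B - z * A.
  by rewrite /B /A mulr_sumr -sumrB; apply: eq_bigr => i _; ring.
rewrite -/x B_split in var_ineq.
have gap_split : finite_objective y - (finite_objective x + mu / 2 * C) =
    (Uk beta s Sx + mu * z * (Sy - Sx) - Uk beta s Sy) + mu * (B - z * A).
  by rewrite /finite_objective Sx_def sq_expand -/Sy -A_def; field.
rewrite -subr_ge0 gap_split; apply: addr_ge0; first lra.
by rewrite mulr_ge0 // ltW.
Qed.

Lemma zeta_point_minimizer z :
  zeta_cond beta s mu nu z -> is_minimizer beta s mu nu (zeta_point z).
Proof.
move=> Z; have [_ [Sx_gt0 _]] := Z.
split; first exact: zeta_point_feasible.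
move=> y y_ge0; rewrite objective_finite ?gt_eqF // /objective.
case: ifP => [_|/negbT Sy_neq0]; first exact: leey.
rewrite lee_fin; apply: le_trans (objective_growth Z y_ge0 Sy_neq0).
rewrite lerDl; apply: mulr_ge0; first by rewrite divr_ge0 // ltW.
by apply: sumr_ge0 => i _; exact: sqr_ge0.
Qed.

(* By quadratic growth, any other minimizer is at distance 0 from it. *)
Lemma minimizer_eq_zeta_point z x :
  zeta_cond beta s mu nu z -> is_minimizer beta s mu nu x -> x = zeta_point z.
Proof.
move=> Z [x_ge0 x_min]; have [_ [Sz_gt0 _]] := Z.
have := x_min _ (zeta_point_feasible z).
rewrite (objective_finite (x := zeta_point z)) ?gt_eqF // /objective.
case: ifP => [//|/negbT Sx_neq0]; rewrite lee_fin => le_obj.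
have := le_trans (objective_growth Z x_ge0 Sx_neq0) le_obj.
rewrite gerDl pmulr_rle0 ?divr_gt0 // => dist_le0.
have dist0 : \sum_(i < n) (x i - zeta_point z i) ^+ 2 = 0.
  by apply/eqP; rewrite eq_le dist_le0 sumr_ge0 // => i _; exact: sqr_ge0.
apply/funext => i; apply/eqP; rewrite -subr_eq0 -sqrf_eq0.
by have /psumr_eq0P -> // := dist0; move=> j _; exact: sqr_ge0.
Qed.

End Optimality.

Section Cubic.
Variables (R : realType) (n : nat) (beta s mu : R) (nu : 'I_n -> R).
Hypotheses (beta_gt0 : 0 < beta) (s_gt0 : 0 < s) (mu_gt0 : 0 < mu).

(* If the active set at zeta is exactly {i < m}, then zeta is the largest
   root of the m-th cubic: for w > zeta the truncated sum T(w) grows, and then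
   mu w T(w)^2 - beta T(w) - s > 0. *)
Lemma zeta_largest_root z (m : nat) :
  zeta_cond beta s mu nu z ->
  (forall i : 'I_n, (i < m)%N -> 0 <= nu i + z) ->
  (forall i : 'I_n, ~~ (i < m)%N -> nu i + z <= 0) ->
  is_largest_root (cubic_eq beta s mu nu m) z.
Proof.
move=> [z_gt0 [S_gt0 Ez]] act inact.
have S_def := active_sum_truncate act inact.
rewrite -/(active_sum nu z) S_def in S_gt0 Ez.
set Tz := \sum_(i < n | (i < m)%N) (nu i + z) in S_gt0 Ez *.
have cubic_z : mu * z * Tz ^+ 2 = beta * Tz + s by apply/Uk'_eq_cubic.
split=> [//|w]; rewrite /cubic_eq /=.
set Tw := \sum_(i < n | (i < m)%N) (nu i + w) => cubic_w.
rewrite leNgt; apply/negP => zw.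
have TzTw : Tz <= Tw by apply: ler_sum => i _; rewrite lerD2l ltW.
have Tw_gt0 : 0 < Tw by apply: lt_le_trans TzTw.
have beta_lt : beta < mu * z * Tz.
  have : 0 < (mu * z * Tz - beta) * Tz.
    by rewrite (_ : (mu * z * Tz - beta) * Tz = s) //; lra.
  by rewrite pmulr_lgt0 // subr_gt0.
(* Subtracting the two cubic relations, the excess of mu w T(w)^2 over
   mu z T(z)^2 exceeds the increase beta (T(w) - T(z)) of the right side. *)
have w_excess : 0 < (w - z) * (mu * Tw ^+ 2).
  by rewrite mulr_gt0 ?subr_gt0 // mulr_gt0 // exprn_gt0.
have slope_z : 0 <= (mu * z * Tz - beta) * (Tw - Tz).
  by rewrite mulr_ge0 // subr_ge0 // ltW.
have slope_w : 0 <= mu * z * (Tw - Tz) * Tw.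
  by rewrite !mulr_ge0 ?subr_ge0 // ltW.
nra.
Qed.

Hypothesis nu_sorted : forall i j : 'I_n, (i <= j)%N -> nu j <= nu i.

(* The first coordinate is always active at zeta, since S(zeta) > 0. *)
Lemma first_active z (i : 'I_n) :
  zeta_cond beta s mu nu z -> nat_of_ord i = 0%N -> 0 <= nu i + z.
Proof.
move=> [_ [S_gt0 _]] i0.
have [j j_pos] : exists j : 'I_n, 0 < nu j + z.
  apply/not_existsP => none; move: S_gt0; rewrite big1 ?ltxx // => j _.
  by apply: max_l; rewrite leNgt; apply/negP => /(none j).
by apply: le_trans (ltW j_pos) _; rewrite lerD2r nu_sorted // i0.
Qed.

(* With i' the smallest index satisfying the index condition, the active set
   at zeta is {i < i'}. *)
Lemma smallest_index_largest_root z (j : 'I_n) :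
  zeta_cond beta s mu nu z -> smallest_index beta s mu nu j ->
  is_largest_root (cubic_eq beta s mu nu j) z.
Proof.
move=> Z [j_cond j_min]; apply: (zeta_largest_root Z) => i.
  move=> ij; case: (posnP i) => [i0|i_pos]; first exact: first_active Z i0.
  rewrite leNgt; apply/negP => neg.
  have z_le : z <= - nu i by lra.
  have := j_min i (index_cond_of_le beta_gt0 s_gt0 mu_gt0 Z i_pos z_le).
  by rewrite leqNgt ij.
rewrite -leqNgt => ji.
by have := index_cond_ge beta_gt0 s_gt0 mu_gt0 Z j_cond; have := nu_sorted ji; lra.
Qed.

(* If no index satisfies the index condition, every coordinate is active. *)
Lemma no_index_largest_root z :
  zeta_cond beta s mu nu z -> ~ (exists j : 'I_n, index_cond beta s mu nu j) ->
  is_largest_root (cubic_eq beta s mu nu n) z.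
Proof.
move=> Z none; apply: (zeta_largest_root Z) => i; last by rewrite ltn_ord.
move=> _; case: (posnP i) => [i0|i_pos]; first exact: first_active Z i0.
rewrite leNgt; apply/negP => neg; apply: none; exists i.
by apply: (index_cond_of_le beta_gt0 s_gt0 mu_gt0 Z i_pos); lra.
Qed.

End Cubic.

Theorem lemma1 (R : realType) (n : nat) (mu beta s : R) (nu : 'I_n -> R) :
  (0 < n)%N -> 0 < mu -> 0 < beta -> 0 < s ->
  (exists! x : 'I_n -> R, is_minimizer beta s mu nu x) /\
  (exists! z : R, zeta_cond beta s mu nu z) /\
  (forall (x : 'I_n -> R) (z : R), is_minimizer beta s mu nu x ->
     zeta_cond beta s mu nu z -> forall i, x i = Num.max 0 (nu i + z)) /\
  ((forall i j : 'I_n, (i <= j)%N -> nu j <= nu i) ->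
   forall z : R, zeta_cond beta s mu nu z ->
     (forall j : 'I_n, smallest_index beta s mu nu j ->
        is_largest_root (cubic_eq beta s mu nu j) z) /\
     ((~ exists j : 'I_n, index_cond beta s mu nu j) ->
        is_largest_root (cubic_eq beta s mu nu n) z)).
Proof.
move=> n_gt0 mu_gt0 beta_gt0 s_gt0.
have [z0 Z0] := zeta_cond_exists nu beta_gt0 s_gt0 mu_gt0 n_gt0.
split.
  exists (zeta_point nu z0); split; first exact: zeta_point_minimizer.
  by move=> x /(minimizer_eq_zeta_point beta_gt0 s_gt0 mu_gt0 Z0).
split; first by exists z0; split=> // z /(zeta_cond_unique beta_gt0 s_gt0 mu_gt0 Z0).
split.
  by move=> x z /(minimizer_eq_zeta_point beta_gt0 s_gt0 mu_gt0) eq_x /eq_x ->.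
move=> nu_sorted z Z; split=> [j|].
  exact: smallest_index_largest_root.
exact: no_index_largest_root.
Qed.
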